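(* Consider the Data Revocation Game with homogeneous dependent users: all users have the same parameters $\theta>0$, $\ell>0$, $\xi>0$, $d^{\max}>0$, and independence index $\epsilon_i=0$ for all $i$ (with the convention $\ln 0=-\infty$). Then: (1) If $d^{\max}>\frac{1}{I\xi\ell}$, the symmetric profile with, for all $i\in\mathcal I$, $$d_i^*=\frac{1}{2\theta\ell(I-1)}\Big(d^{\max}(\xi+\theta\ell(I-1))-\sqrt{(d^{\max})^2(\xi+\theta\ell(I-1))^2-4\theta(I-1)d^{\max}/I}\Big)$$ satisfies $d_i^*\in(0,d^{\max})$ and is a Nash equilibrium. (2) If $d^{\max}\le\frac{1}{I\xi\ell}$, the profile $d_i^*=d^{\max}$ for all $i\in\mathcal I$ is a Nash equilibrium.
   Context: Data Revocation Game: a finite set of users $\mathcal I=\{1,\dots,I\}$, $I\ge 2$. Each user $i$ has parameters $d_i^{\max}>0$, $\epsilon_i\ge 0$ (independence index), $\xi_i>0$ (marginal privacy cost), $\ell_i>0$ (data uniqueness level), $\theta_i\ge 0$ (marginal unlearning cost). Each user chooses $d_i\in[0,d_i^{\max}]$ (data kept). Payoff $$U_i(d_i,\boldsymbol{d_{-i}})=\ln\Big(\sum_{j\in\mathcal I}d_j+\epsilon_i\Big)-\xi_i d_i\ell_i-\theta_i d_i\sum_{j\neq i}\Big(1-\frac{d_j}{d_j^{\max}}\Big)\ell_j^2 .$$ A Nash equilibrium is a profile $(d_i^* )$ with $d_i^*\in[0,d_i^{\max}]$ and $U_i(d_i^*,\boldsymbol{d_{-i}^*})\ge U_i(d_i,\boldsymbol{d_{-i}^*})$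 for all $i$ and all $d_i\in[0,d_i^{\max}]$. *)

From HB Require Import structures.
From mathcomp Require Import all_boot all_order all_algebra.
From mathcomp Require Import all_classical all_reals all_analysis.
Set Implicit Arguments. Unset Strict Implicit. Unset Printing Implicit Defensive.
Import Order.TTheory GRing.Theory Num.Theory.
Local Open Scope ring_scope.

(* The payoff is extended-real valued so that ln 0 = -oo (convention of the paper);
   for a nonpositive argument of the logarithm the payoff is -oo. *)

Definition upd (R : realType) (I : nat) (d : 'I_I -> R) (i : 'I_I) (x : R) : 'I_I -> R :=
  fun j => if j == i then x else d j.

Definition payoff (R : realType) (I : nat)
  (dmax eps xi ell theta : 'I_I -> R) (i : 'I_I) (d : 'I_I -> R) : \bar R :=
  let S := \sum_(j < I) d j + eps i in
  if 0 < S then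
    (ln S - xi i * d i * ell i
       - theta i * d i * \sum_(j < I | j != i) (1 - d j / dmax j) * ell j ^+ 2)%:E
  else -oo%E.

Definition feasible (R : realType) (I : nat) (dmax : 'I_I -> R) (d : 'I_I -> R) : Prop :=
  forall i, 0 <= d i <= dmax i.

Definition nash_eq (R : realType) (I : nat)
  (dmax eps xi ell theta : 'I_I -> R) (d : 'I_I -> R) : Prop :=
  feasible dmax d /\
  forall (i : 'I_I) (x : R), 0 <= x <= dmax i ->
    (payoff dmax eps xi ell theta i (upd d i x) <= payoff dmax eps xi ell theta i d)%E.

From HB Require Import structures.
From mathcomp Require Import all_boot all_order all_algebra.
From mathcomp Require Import all_classical all_reals all_analysis.
From mathcomp Require Import ring lra.
Set Implicit Arguments. Unset Strict Implicit. Unset Printing Implicit Defensive.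
Import Order.TTheory GRing.Theory Num.Theory.
Local Open Scope ring_scope.

(* When every other user keeps d, user i's payoff as a function of its own
   choice x is ln (x + (I - 1) d) minus a linear cost of slope c(d), the
   marginal cost.  By concavity of ln, ln (x + (I - 1) d) - ln (I d) is at most
   (x - d) / (I d), so the symmetric profile d is an equilibrium as soon as
   (x - d) / (I d) <= (x - d) c(d) on [0, dmax].  This holds at an interior d
   with c(d) = 1 / (I d), a quadratic equation in d whose smaller root is the
   d* of the theorem and lies in (0, dmax) when dmax > 1 / (I xi ell);
   and it holds at d = dmax when c(dmax) = xi ell <= 1 / (I dmax). *)

Lemma ln_le_subr1 (R : realType) (y : R) : 0 < y -> ln y <= y - 1.
Proof. by move=> y0; have := expR_ge1Dx (ln y); rewrite lnK ?posrE //; lra. Qed.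

Lemma lnB_le_div (R : realType) (s t : R) :
  0 < s -> 0 < t -> ln s - ln t <= (s - t) / t.
Proof.
move=> s0 t0; rewrite -ln_div ?posrE // mulrBl divff ?gt_eqF //.
exact/ln_le_subr1/divr_gt0.
Qed.

Definition quadratic_small_root {R : rcfType} (a b c : R) : R :=
  (b - Num.sqrt (b ^+ 2 - 4 * a * c)) / (2 * a).

Section QuadraticSmallRoot.
Variables (R : rcfType) (a b c : R).

Lemma quadratic_discr_gt0 (m : R) : 0 < a ->
  a * m ^+ 2 - b * m + c < 0 -> 0 < b ^+ 2 - 4 * a * c.
Proof.
move=> a0 qm; have : 4 * a * (a * m ^+ 2 - b * m + c) < 0.
  by rewrite pmulr_rlt0 // mulr_gt0.
have -> : 4 * a * (a * m ^+ 2 - b * m + c) =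
  (2 * a * m - b) ^+ 2 - (b ^+ 2 - 4 * a * c) by ring.
by have := sqr_ge0 (2 * a * m - b); lra.
Qed.

Lemma quadratic_small_rootE : a != 0 -> 0 <= b ^+ 2 - 4 * a * c ->
  let t := quadratic_small_root a b c in a * t ^+ 2 - b * t + c = 0.
Proof.
move=> a0 D0 t; rewrite {}/t /quadratic_small_root.
set s := Num.sqrt _; have s2 : s ^+ 2 = b ^+ 2 - 4 * a * c by rewrite sqr_sqrtr.
have -> : a * ((b - s) / (2 * a)) ^+ 2 - b * ((b - s) / (2 * a)) + c =
  (s ^+ 2 - (b ^+ 2 - 4 * a * c)) / (4 * a) by field; rewrite ?pnatr_eq0.
by rewrite s2 subrr mul0r.
Qed.

Lemma quadratic_small_root_gt0_lt (m : R) : 0 < a -> 0 < c -> 0 < m ->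
  a * m ^+ 2 - b * m + c < 0 -> 0 < quadratic_small_root a b c < m.
Proof.
move=> a0 c0 m0 qm; have D0 := quadratic_discr_gt0 a0 qm.
rewrite /quadratic_small_root; set s := Num.sqrt _.
have s2 : s ^+ 2 = b ^+ 2 - 4 * a * c by rewrite sqr_sqrtr // ltW.
have s0 : 0 <= s by exact: sqrtr_ge0.
have b0 : 0 < b by nra.
have sb : s < b by nra.
have sm : b - 2 * a * m < s by nra.
have a2 : 0 < 2 * a by lra.
by rewrite divr_gt0 ?subr_gt0 //= ltr_pdivrMr //; lra.
Qed.

End QuadraticSmallRoot.

Lemma sumr_neq_cst (R : ringType) (I : nat) (i : 'I_I) (F : 'I_I -> R) (v : R) :
  (forall j, j != i -> F j = v) -> \sum_(j < I | j != i) F j = (I%:R - 1) * v.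
Proof.
move=> Fv; rewrite (eq_bigr (fun _ => v)) // sumr_const cardC1 card_ord.
have I_gt0 : (0 < I)%N by apply: leq_ltn_trans (ltn_ord i).
by rewrite -[in I%:R](prednK I_gt0) -natr1 addrK mulr_natl.
Qed.

Lemma sumr_upd_cst (R : realType) (I : nat) (i : 'I_I) (d x : R) :
  \sum_(j < I) upd (fun _ => d) i x j = x + (I%:R - 1) * d.
Proof.
rewrite (bigD1 i) //= /upd eqxx; congr (_ + _).
by apply: sumr_neq_cst => j /negbTE ->.
Qed.

Section SymmetricProfiles.
Variables (R : realType) (I : nat) (dm xi ell theta : R).

Definition sym_payoff (i : 'I_I) (d : 'I_I -> R) : \bar R :=
  payoff (fun _ => dm) (fun _ => 0) (fun _ => xi) (fun _ => ell) (fun _ => theta) i d.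

Definition marginal_cost (d : R) : R :=
  xi * ell + theta * (I%:R - 1) * (1 - d / dm) * ell ^+ 2.

Lemma sym_payoff_upd_le (i : 'I_I) (d x : R) : (2 <= I)%N -> 0 < d -> 0 <= x ->
  ln (x + (I%:R - 1) * d) - ln (I%:R * d) <= (x - d) * marginal_cost d ->
  (sym_payoff i (upd (fun _ => d) i x) <= sym_payoff i (fun _ => d))%E.
Proof.
move=> I_ge2 d0 x0 lnle; have n1 : 1 < I%:R :> R by rewrite ltr1n.
have sum_cst : \sum_(j < I) (fun _ => d) j = I%:R * d.
  by rewrite sumr_const card_ord mulr_natl.
rewrite /sym_payoff /payoff sumr_upd_cst sum_cst !addr0.
set cost := (1 - d / dm) * ell ^+ 2.
rewrite (@sumr_neq_cst _ _ i _ cost); last by move=> j /negbTE; rewrite /upd => ->.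
rewrite (@sumr_neq_cst _ _ i _ cost) //.
have S1 : 0 < x + (I%:R - 1) * d by apply: ltr_wpDl => //; apply: mulr_gt0; lra.
have S2 : 0 < I%:R * d by apply: mulr_gt0; lra.
by rewrite /upd eqxx S1 S2 lee_fin {}/cost; move: lnle; rewrite /marginal_cost; lra.
Qed.

Lemma nash_eq_cst (d : R) : (2 <= I)%N -> 0 < d <= dm ->
  (forall x, 0 <= x <= dm -> (x - d) / (I%:R * d) <= (x - d) * marginal_cost d) ->
  nash_eq (fun _ : 'I_I => dm) (fun _ => 0) (fun _ => xi) (fun _ => ell) (fun _ => theta)
    (fun _ => d).
Proof.
move=> I_ge2 /andP[d0 ddm] gain; have n1 : 1 < I%:R :> R by rewrite ltr1n.
split=> [j|i x /andP[x0 xdm]]; first by apply/andP; split; lra.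
apply: sym_payoff_upd_le => //; apply: le_trans (gain x _); last exact/andP.
have -> : x - d = x + (I%:R - 1) * d - I%:R * d by ring.
by apply: lnB_le_div; [apply: ltr_wpDl => //|]; apply: mulr_gt0; lra.
Qed.

Definition interior_level : R :=
  let a := theta * ell * (I%:R - 1) in
  quadratic_small_root a (dm * (xi + a)) (dm / (I%:R * ell)).

Lemma interior_quadratic_at_dm_lt0 (a : R) : 0 < xi -> 0 < ell -> 0 < dm ->
  (0 < I)%N -> 1 / (I%:R * xi * ell) < dm ->
  a * dm ^+ 2 - dm * (xi + a) * dm + dm / (I%:R * ell) < 0.
Proof.
move=> xi_gt0 ell_gt0 dm_gt0 I_gt0; have n_gt0 : 0 < I%:R :> R by rewrite ltr0n.
rewrite ltr_pdivrMr ?mulr_gt0 // => dm_gt.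
have -> : a * dm ^+ 2 - dm * (xi + a) * dm + dm / (I%:R * ell) =
    dm / (I%:R * ell) * (1 - dm * (I%:R * xi * ell)).
  by field; rewrite !gt_eqF.
by rewrite pmulr_rlt0 ?subr_lt0 // divr_gt0 // mulr_gt0.
Qed.

Lemma interior_level_gt0_lt : (2 <= I)%N -> 0 < theta -> 0 < ell -> 0 < xi ->
  0 < dm -> 1 / (I%:R * xi * ell) < dm -> 0 < interior_level < dm.
Proof.
move=> I_ge2 theta_gt0 ell_gt0 xi_gt0 dm_gt0 dm_gt.
have n1 : 1 < I%:R :> R by rewrite ltr1n.
rewrite /interior_level; set a := theta * ell * (I%:R - 1).
have a_gt0 : 0 < a by rewrite !mulr_gt0 // subr_gt0.
have c_gt0 : 0 < dm / (I%:R * ell) by rewrite divr_gt0 // mulr_gt0 //; lra.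
exact: quadratic_small_root_gt0_lt a_gt0 c_gt0 dm_gt0
  (interior_quadratic_at_dm_lt0 a xi_gt0 ell_gt0 dm_gt0 (ltnW I_ge2) dm_gt).
Qed.

Lemma marginal_cost_interior_level : (2 <= I)%N -> 0 < theta -> 0 < ell ->
  0 < xi -> 0 < dm -> 1 / (I%:R * xi * ell) < dm ->
  marginal_cost interior_level = (I%:R * interior_level)^-1.
Proof.
move=> I_ge2 theta_gt0 ell_gt0 xi_gt0 dm_gt0 dm_gt.
have n1 : 1 < I%:R :> R by rewrite ltr1n.
have /andP[t_gt0 _] := interior_level_gt0_lt I_ge2 theta_gt0 ell_gt0 xi_gt0 dm_gt0 dm_gt.
set a := theta * ell * (I%:R - 1).
have q_lt0 := interior_quadratic_at_dm_lt0 a xi_gt0 ell_gt0 dm_gt0 (ltnW I_ge2) dm_gt.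
have a_gt0 : 0 < a by rewrite !mulr_gt0 // subr_gt0.
have := quadratic_small_rootE (lt0r_neq0 a_gt0) (ltW (quadratic_discr_gt0 a_gt0 q_lt0)).
move: t_gt0; rewrite /interior_level -/a; set t := quadratic_small_root _ _ _.
move=> t_gt0 root_t.
(* the root equation reads I ell t (b - a t) = dm, with b := dm (xi + a) *)
have -> : marginal_cost t =
    I%:R * ell * (dm * (xi + a) * t - a * t ^+ 2) / dm / (I%:R * t).
  by rewrite /marginal_cost /a; field; rewrite !gt_eqF //; lra.
have -> : dm * (xi + a) * t - a * t ^+ 2 = dm / (I%:R * ell) by lra.
by field; rewrite !gt_eqF //; lra.
Qed.

Lemma nash_eq_interior_level : (2 <= I)%N -> 0 < theta -> 0 < ell -> 0 < xi ->
  0 < dm -> 1 / (I%:R * xi * ell) < dm ->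
  nash_eq (fun _ : 'I_I => dm) (fun _ => 0) (fun _ => xi) (fun _ => ell)
    (fun _ => theta) (fun _ => interior_level).
Proof.
move=> I_ge2 theta_gt0 ell_gt0 xi_gt0 dm_gt0 dm_gt.
have /andP[t_gt0 t_lt] :=
  interior_level_gt0_lt I_ge2 theta_gt0 ell_gt0 xi_gt0 dm_gt0 dm_gt.
apply: nash_eq_cst => [//||x _]; first by rewrite t_gt0 ltW.
by rewrite marginal_cost_interior_level.
Qed.

Lemma nash_eq_dmax : (2 <= I)%N -> 0 < ell -> 0 < xi -> 0 < dm ->
  dm <= 1 / (I%:R * xi * ell) ->
  nash_eq (fun _ : 'I_I => dm) (fun _ => 0) (fun _ => xi) (fun _ => ell)
    (fun _ => theta) (fun _ => dm).
Proof.
move=> I_ge2 ell_gt0 xi_gt0 dm_gt0 dm_le; have n_gt0 : 0 < I%:R :> R by rewrite ltr0n ltnW.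
apply: nash_eq_cst => [//||x /andP[_ x_le]]; first by rewrite dm_gt0 lexx.
have -> : marginal_cost dm = xi * ell.
  by rewrite /marginal_cost divff ?gt_eqF // subrr mulr0 mul0r addr0.
have cost_le : xi * ell <= (I%:R * dm)^-1.
  move: dm_le; rewrite ler_pdivlMr ?mulr_gt0 // -div1r ler_pdivlMr ?mulr_gt0 //.
  by move=> dm_le; lra.
by rewrite ler_wnM2l // subr_le0.
Qed.

End SymmetricProfiles.

Theorem proposition1 (R : realType) (I : nat) (theta ell xi dm : R) :
  (2 <= I)%N -> 0 < theta -> 0 < ell -> 0 < xi -> 0 < dm ->
  let c := fun _ : 'I_I => 0 : R in
  let K := fun v : R => fun _ : 'I_I => v in
  (dm > 1 / (I%:R * xi * ell) ->
     let ds := (dm * (xi + theta * ell * (I%:R - 1))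
                - Num.sqrt (dm ^+ 2 * (xi + theta * ell * (I%:R - 1)) ^+ 2
                            - 4 * theta * (I%:R - 1) * dm / I%:R))
               / (2 * theta * ell * (I%:R - 1)) in
     (0 < ds /\ ds < dm) /\ nash_eq (K dm) c (K xi) (K ell) (K theta) (K ds)) /\
  (dm <= 1 / (I%:R * xi * ell) ->
     nash_eq (K dm) c (K xi) (K ell) (K theta) (K dm)).
Proof.
move=> I_ge2 theta_gt0 ell_gt0 xi_gt0 dm_gt0 c K; rewrite {}/c {}/K.
split=> [dm_gt|]; last exact: nash_eq_dmax.
set ds := _ / (2 * theta * ell * (I%:R - 1)).
have n_gt0 : 0 < I%:R :> R by rewrite ltr0n ltnW.
have -> : ds = interior_level I dm xi ell theta.
  rewrite /ds /interior_level /quadratic_small_root.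
  by congr ((_ - Num.sqrt _) / _); [field; rewrite !gt_eqF | ring].
have /andP[t_gt0 t_lt] :=
  interior_level_gt0_lt I_ge2 theta_gt0 ell_gt0 xi_gt0 dm_gt0 dm_gt.
by split; [split | exact: nash_eq_interior_level].
Qed.
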